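(* Let $A=KQ/I$ be a finite-dimensional gentle algebra over the field $K$, let $B$ be a band for $A$ and let $q\ge 1$ be an integer. Put $\mathbf{d}=q\cdot\mathbf{dim}\,M(B,\lambda,1)$ (independent of $\lambda$). Then, in the Zariski topology of the module variety $\mathrm{mod}(A,\mathbf{d})$, $$\overline{\mathcal{O}_{B^{\times q}}}=\overline{\bigcup_{\lambda_1,\dots,\lambda_q\in K^*}\mathcal{O}_{M(B,\lambda_1,1)\oplus\cdots\oplus M(B,\lambda_q,1)}},$$ where $\mathcal{O}_M$ denotes the $\mathrm{GL}_{\mathbf{d}}$-orbit of (the points isomorphic to) a module $M$.
   Context: Letters are arrows $\alpha\in Q_1$ (direct letters, traversed from $s(\alpha)$ to $t(\alpha)$) and formal inverses $\alpha^{-1}$ (inverse letters, traversed from $t(\alpha)$ to $s(\alpha)$). A string is a walk $c_1\cdots c_m$ in $Q$ which is reduced (no letter followed by its own inverse) and avoids the relations of $I$ (and their inverses); there are trivial strings $e_v$ of length $0$; a string is identified with its inverse walk. A band is a closed walk $b_1\cdots b_m$ ($m\ge1$) all of whose powers are strings, considered up to cyclic rotation and inversion; it is minimal if it is not of the form $(B')^r$ with $r\ge 2$. For a band $B=b_1\cdots b_m$ with vertex positions $v_1,\dots,v_m$ ($b_t$ goes from $v_t$ to $v_{t+1}$, $v_{m+1}=v_1$), $\lambda\in K^*$ and $q\ge 1$, the band module $M(B,\lambda,q)$ places a copy of $K^q$ at each position $t$ (the space at a vertex $x$ of $Q$ is the direct sum of the copies at positions $t$ with $v_t=x$); each letter $b_t$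 gives the arrow it involves acting between the copies at positions $t$ and $t+1$ by the identity, except for one fixed letter, where it acts by the Jordan block $J(\lambda,q)$. $\mathrm{mod}(A,\mathbf{d})$ is the affine variety of representations of $(Q,I)$ with dimension vector $\mathbf{d}$, with $\mathrm{GL}_{\mathbf{d}}$ acting by base change. For a finite multi-set $\mathcal{D}$ consisting of strings $C_1,\dots,C_s$ and pairwise distinct bands $B_1,\dots,B_t$ with multiplicities $q_1,\dots,q_t$ (written $B_j^{\times q_j}$), its family $\mathcal{O}_{\mathcal{D}}\subseteq\mathrm{mod}(A,\mathbf{d})$ ($\mathbf{d}$ the total dimension vector) is the union of the orbits of all modules $\bigoplus_i M(C_i)\oplus\bigoplus_j\bigoplus_k M(B_j,\lambda_{jk},q_{jk})$ where $(q_{jk})_k$ is a partition of $q_j$ and $\lambda_{jk}\in K^*$; here $M(C)$ is the string module (a copy of $K$ at each vertex position of $C$, arrows acting by identities along the letters of $C$). Standing assumption: $K$ is an algebraically closed field. *)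

From mathcomp Require Import all_boot all_order all_algebra.
Set Implicit Arguments. Unset Strict Implicit. Unset Printing Implicit Defensive.
Import GRing.Theory.
Local Open Scope ring_scope.

Section Gentle.

(* A finite quiver with vertices 'I_n and arrows 'I_m; arrow a goes from
   src a to tgt a.  [rel a b] means that the length-two path "a then b"
   (tgt a = src b) is one of the generating relations of I. *)
Variables (n m : nat) (src tgt : 'I_m -> 'I_n) (rel : rel 'I_m).

Definition gentle : Prop :=
  [/\ (forall a b, rel a b -> tgt a = src b),
      (forall v, #|[set a | src a == v]| <= 2 /\ #|[set a | tgt a == v]| <= 2)%N,
      (forall b, #|[set a | (tgt a == src b) && ~~ rel a b]| <= 1 /\
                 #|[set c | (tgt b == src c) && ~~ rel b c]| <= 1)%N,
      (forall b, #|[set a | (tgt a == src b) && rel a b]| <= 1 /\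
                 #|[set c | (tgt b == src c) && rel b c]| <= 1)%N &
      (* finite dimension: the paths avoiding the relations (a basis of KQ/I)
         have bounded length *)
      exists N : nat, forall (a0 : 'I_m) (p : seq 'I_m),
        path (fun a b => (tgt a == src b) && ~~ rel a b) a0 p -> (size p < N)%N].

(* a letter: (a, true) = direct letter a, (a, false) = inverse letter a^-1 *)
Definition letter := ('I_m * bool)%type.
Definition lstart (l : letter) : 'I_n := if l.2 then src l.1 else tgt l.1.
Definition lend (l : letter) : 'I_n := if l.2 then tgt l.1 else src l.1.

(* l1 may be followed by l2 in a string *)
Definition ok2 (l1 l2 : letter) : bool :=
  [&& lend l1 == lstart l2,
      ~~ ((l1.1 == l2.1) && (l1.2 != l2.2)),
      ~~ [&& l1.2, l2.2 & rel l1.1 l2.1] &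
      ~~ [&& ~~ l1.2, ~~ l2.2 & rel l2.1 l1.1]].

Definition is_string (w : seq letter) : bool :=
  if w is l :: w' then path ok2 l w' else true.

Definition is_band (B : seq letter) : Prop :=
  [/\ (0 < size B)%N,
      (match B with [::] => true | l :: _ => lend (last l B) == lstart l end) &
      forall k, (0 < k)%N -> is_string (flatten (nseq k B))].

Variable K : fieldType.

(* row-vector convention: arrow a acts by v |-> v *m x a *)
Definition rep (d : 'I_n -> nat) := forall a : 'I_m, 'M[K]_(d (src a), d (tgt a)).

Definition modvar (d : 'I_n -> nat) (x : rep d) : Prop :=
  forall a b (e : tgt a = src b), rel a b ->
    x a *m castmx (esym (congr1 d e), erefl (d (tgt b))) (x b) = 0.

Definition rep_iso (d e : 'I_n -> nat) (x : rep d) (y : rep e) : Prop :=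
  exists (f : forall v, 'M[K]_(d v, e v)) (g : forall v, 'M[K]_(e v, d v)),
    [/\ forall v, f v *m g v = 1%:M,
        forall v, g v *m f v = 1%:M &
        forall a, x a *m f (tgt a) = f (src a) *m y a].

Inductive polyfun (d : 'I_n -> nat) : (rep d -> K) -> Prop :=
| pf_const c : polyfun (fun _ => c)
| pf_coord a i j : polyfun (fun x => x a i j)
| pf_add f g : polyfun f -> polyfun g -> polyfun (fun x => f x + g x)
| pf_mul f g : polyfun f -> polyfun g -> polyfun (fun x => f x * g x).

Definition zclosure (d : 'I_n -> nat) (S : rep d -> Prop) : rep d -> Prop :=
  fun x => forall f, polyfun f -> (forall y, S y -> f y = 0) -> f x = 0.

Definition prep := {d : 'I_n -> nat & rep d}.
Definition dsum2 (P Q : prep) : prep :=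
  existT (fun d => rep d) (fun v => (projT1 P v + projT1 Q v)%N)
    (fun a => block_mx (projT2 P a) 0 0 (projT2 Q a)).
Definition prep0 : prep := existT (fun d => rep d) (fun _ => 0%N) (fun a => 0).
Definition dsum (s : seq prep) : prep := foldr dsum2 prep0 s.

Section BandModule.
Variables (B : seq letter) (lam : K) (q : nat).

Definition bpos := 'I_(size B).
Definition blet (p : bpos) : letter := tnth (in_tuple B) p.
Definition bvert (p : bpos) : 'I_n := lstart (blet p).

(* basis of the space at vertex x: (position t with v_t = x, index < q) *)
Definition bidx (x : 'I_n) : finType := ({p : bpos | bvert p == x} * 'I_q)%type.
Definition bdim (x : 'I_n) : nat := #|{: bidx x}|.

Definition jordan (i j : 'I_q) : K :=
  if i == j then lam else if (val j == (val i).+1)%N then 1 else 0.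

(* the letter at position 0 is the fixed letter acting by J(lam, q) *)
Definition bcoef (p : bpos) (i j : 'I_q) : K :=
  if (val p == 0)%N then jordan i j else (i == j)%:R.

Definition bentry (a : 'I_m) (u : bidx (src a)) (w : bidx (tgt a)) : K :=
  \sum_(p : bpos)
    (if (blet p).1 == a then
       (if (blet p).2 then
          ((val u.1 == p) && (val w.1 == ordS p))%:R * bcoef p u.2 w.2
        else
          ((val u.1 == ordS p) && (val w.1 == p))%:R * bcoef p u.2 w.2)
     else 0).

Definition bandmod : prep :=
  existT (fun d => rep d) bdim
    (fun a => \matrix_(i, j) bentry (enum_val i) (enum_val j)).

End BandModule.

Definition band_family (B : seq letter) (q : nat) (d : 'I_n -> nat) : rep d -> Prop :=
  fun x => modvar x /\
    exists ls : seq (K * nat),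
      [/\ all (fun l => (l.1 != 0) && (0 < l.2)%N) ls,
          sumn (map snd ls) = q &
          rep_iso x (projT2 (dsum [seq bandmod B l.1 l.2 | l <- ls]))].

Definition band_union (B : seq letter) (q : nat) (d : 'I_n -> nat) : rep d -> Prop :=
  fun x => modvar x /\
    exists lams : seq K,
      [/\ size lams = q, all (fun l => l != 0) lams &
          rep_iso x (projT2 (dsum [seq bandmod B l 1 | l <- lams]))].

End Gentle.

From mathcomp Require Import all_boot all_order all_algebra.
From mathcomp Require Import ring.
Set Implicit Arguments. Unset Strict Implicit. Unset Printing Implicit Defensive.
Import GRing.Theory.
Local Open Scope ring_scope.

(* Every module of the family is isomorphic to M(B, Phi), the band module in
   which an arbitrary matrix Phi replaces the Jordan block on the distinguished
   letter, with Phi a direct sum of Jordan blocks, hence upper triangular.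
   M(B, -) turns similar matrices into isomorphic modules and block sums into
   direct sums, and its matrix entries are polynomial in those of Phi.  Along
   the line Phi + t diag(s), with s injective and nowhere zero, the diagonal
   entries are pairwise distinct and nonzero for all but finitely many t; the
   matrix is then diagonalizable with nonzero eigenvalues mu_i, and
   M(B, Phi + t diag(s)) is isomorphic to the sum of the M(B, mu_i, 1).  So a
   polynomial function vanishing on the union vanishes at cofinitely many
   points of a line through the given module, hence, K being infinite, at the
   module itself.  Conversely the union is the part of the family in which all
   multiplicities are 1. *)

Lemma sum_delta_l (R : nzSemiRingType) (T : finType) (a : T) (h : T -> R) :
  \sum_(k : T) (a == k)%:R * h k = h a.
Proof.
rewrite (bigD1 a) //= eqxx mul1r big1 ?addr0 // => k /negbTE.
by rewrite eq_sym => ->; rewrite mul0r.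
Qed.

Lemma sum_delta_r (R : nzSemiRingType) (T : finType) (a : T) (h : T -> R) :
  \sum_(k : T) h k * (k == a)%:R = h a.
Proof.
rewrite (bigD1 a) //= eqxx mulr1 big1 ?addr0 // => k /negbTE ->.
by rewrite mulr0.
Qed.

Lemma sum_pair_delta_r (R : comNzRingType) (S : finType) k l (g : S -> 'I_k -> R) (P : 'M[R]_(k, l)) w1 w2 :
  \sum_(t : S * 'I_k) g t.1 t.2 * ((t.1 == w1)%:R * P t.2 w2) = \sum_y g w1 y * P y w2.
Proof.
rewrite -(pair_bigA _ (fun x y => g x y * ((x == w1)%:R * P y w2))) /=.
under eq_bigr do under eq_bigr do rewrite mulrCA.
under eq_bigr do rewrite -mulr_sumr mulrC.
exact: sum_delta_r.
Qed.

Lemma sum_pair_delta_l (R : comNzRingType) (S : finType) k l (g : S -> 'I_l -> R) (P : 'M[R]_(k, l)) u1 u2 :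
  \sum_(t : S * 'I_l) ((u1 == t.1)%:R * P u2 t.2) * g t.1 t.2 = \sum_y P u2 y * g u1 y.
Proof.
rewrite -(pair_bigA _ (fun x y => ((u1 == x)%:R * P u2 y) * g x y)) /=.
under eq_bigr do under eq_bigr do rewrite -mulrA.
under eq_bigr do rewrite -mulr_sumr.
exact: sum_delta_l.
Qed.

Lemma split_lshift m1 n1 (j : 'I_m1) : split (lshift n1 j) = inl j.
Proof. exact: (unsplitK (inl _ j)). Qed.

Lemma split_rshift m1 n1 (j : 'I_n1) : split (rshift m1 j) = inr j.
Proof. exact: (unsplitK (inr _ j)). Qed.

Lemma ord_splitP m1 n1 (i : 'I_(m1 + n1)) :
  (exists i1, i = lshift n1 i1) \/ (exists i2, i = rshift m1 i2).
Proof. by case: (splitP i) => j Hj; [left|right]; exists j; apply: val_inj. Qed.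

Section Polynomial.
Variable K : comNzRingType.

Definition poly_fun (g : K -> K) := exists P : {poly K}, forall t, g t = P.[t].

Lemma poly_fun_ext (g h : K -> K) : g =1 h -> poly_fun h -> poly_fun g.
Proof. by move=> E [P HP]; exists P => t; rewrite E HP. Qed.

Lemma poly_fun_const c : poly_fun (fun _ => c).
Proof. by exists c%:P => t; rewrite hornerC. Qed.

Lemma poly_fun_id : poly_fun id.
Proof. by exists 'X => t; rewrite hornerX. Qed.

Lemma poly_funD g h : poly_fun g -> poly_fun h -> poly_fun (fun t => g t + h t).
Proof. by move=> [P HP] [R HR]; exists (P + R) => t; rewrite hornerD HP HR. Qed.

Lemma poly_funM g h : poly_fun g -> poly_fun h -> poly_fun (fun t => g t * h t).
Proof. by move=> [P HP] [R HR]; exists (P * R) => t; rewrite hornerM HP HR. Qed.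

Lemma poly_fun_sum (I : finType) (h : I -> K -> K) :
  (forall i, poly_fun (h i)) -> poly_fun (fun t => \sum_i h i t).
Proof.
move=> H; have [P HP] := fin_all_exists H.
by exists (\sum_i P i) => t; rewrite horner_sum; apply: eq_bigr => i _.
Qed.

Lemma poly_fun_mulmx k l p q (A : 'M[K]_(k, l)) (M : K -> 'M[K]_(l, p))
    (C : 'M[K]_(p, q)) i j :
  (forall i j, poly_fun (fun t => M t i j)) ->
  poly_fun (fun t => (A *m M t *m C) i j).
Proof.
move=> HM.
apply: (@poly_fun_ext _ (fun t => \sum_l0 (\sum_k0 A i k0 * M t k0 l0) * C l0 j)).
  by move=> t; rewrite !mxE; apply: eq_bigr => l0 _; rewrite !mxE.
apply: poly_fun_sum => l0; apply: poly_funM; last exact: poly_fun_const.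
by apply: poly_fun_sum => k0; apply: poly_funM; [exact: poly_fun_const|].
Qed.

Lemma poly_fun_line_mx k l (A S : 'M[K]_(k, l)) i j :
  poly_fun (fun t => (A + t *: S) i j).
Proof.
apply: (@poly_fun_ext _ (fun t => A i j + t * S i j)); first by move=> t; rewrite !mxE.
by apply: poly_funD; [|apply: poly_funM]; [exact: poly_fun_const|exact: poly_fun_id|exact: poly_fun_const].
Qed.

End Polynomial.

Section ClosedField.
Variable K : closedFieldType.

Lemma closed_field_fresh (s : seq K) : exists x, x \notin s.
Proof.
pose p := \prod_(a <- s) ('X - a%:P) * 'X - 1.
have Pn0 : \prod_(a <- s) ('X - a%:P) != 0 :> {poly K}.
  by rewrite -size_poly_eq0 size_prod_XsubC.
have szp : size p = (size s).+2.
  by rewrite /p size_polyDl size_mulX ?size_prod_XsubC // size_polyN size_poly1.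
have /closed_rootP [x rx] : size p != 1%N by rewrite szp.
exists x; apply: contraL rx => xs.
have /rootP prod0 : root (\prod_(a <- s) ('X - a%:P)) x by rewrite root_prod_XsubC.
by rewrite /root /p !hornerE prod0 mul0r sub0r oppr_eq0 oner_eq0.
Qed.

Lemma closed_field_fresh_seq (bad : seq K) N :
  exists s : seq K, [/\ uniq s, size s = N & {in s, forall t, t \notin bad}].
Proof.
elim: N => [|N [s [us ss sb]]]; first by exists [::].
have [x] := closed_field_fresh (bad ++ s).
rewrite mem_cat negb_or => /andP[xb xs].
exists (x :: s); split => /=; [by rewrite xs us | by rewrite ss |].
by move=> t; rewrite inE => /predU1P [->|/sb].
Qed.

Lemma poly_eq0_cofinite (P : {poly K}) (bad : seq K) :
  (forall t, t \notin bad -> P.[t] = 0) -> P = 0.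
Proof.
move=> P0; apply/eqP; apply: contraT => Pn0.
have [s [us ss sb]] := closed_field_fresh_seq bad (size P).
have rootPs : all (root P) s by apply/allP => t /sb tb; rewrite /root P0.
by have := max_poly_roots Pn0 rootPs us; rewrite ss ltnn.
Qed.

Lemma closed_field_inj_neq0 N :
  exists s : 'I_N -> K, injective s /\ forall i, s i != 0.
Proof.
have [s [s_uniq s_size s_neq0]] := closed_field_fresh_seq [:: 0] N.
exists (fun i => s`_i); split.
  by move=> i j /eqP; rewrite nth_uniq ?s_size // => /eqP /val_inj.
by move=> i; have := s_neq0 s`_i; rewrite mem_nth ?s_size // inE; apply.
Qed.

End ClosedField.

Section Diagonalization.
Variable F : fieldType.

Lemma char_poly_trmx Q (A : 'M[F]_Q) : char_poly A^T = char_poly A.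
Proof.
rewrite /char_poly -det_tr; congr (\det _); apply/matrixP => i j.
by rewrite !mxE eq_sym.
Qed.

Lemma trig_uniq_diagonalizable Q (A : 'M[F]_Q) :
  is_trig_mx A^T -> injective (fun i => A i i) ->
  exists2 P : 'M_Q, P \in unitmx & exists D : 'rV_Q, P *m A = diag_mx D *m P.
Proof.
case: Q A => [|Q] A trigA injA.
  by exists 1%:M; [exact: unitmx1 | exists 0; apply/matrixP => -[]].
have [P Pu /similar_diagPex [D /(similarP Pu) PA]] :
    exists2 P, P \in unitmx & similar_diag P A.
  apply/diagonalizableP; exists [seq A i i | i <- enum 'I_Q.+1].
    by rewrite map_inj_uniq ?enum_uniq.
  rewrite big_map big_enum /=.
  have -> : \prod_i ('X - (A i i)%:P) = char_poly A.
    by rewrite -char_poly_trmx char_poly_trig //; apply: eq_bigr => i _; rewrite mxE.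
  exact/mxminpoly_min/Cayley_Hamilton.
by exists P => //; exists D.
Qed.

Lemma trmx_trig_add_diag Q (A : 'M[F]_Q) (D : 'rV_Q) t :
  is_trig_mx A^T -> is_trig_mx (A + t *: diag_mx D)^T.
Proof.
move=> /is_trig_mxP trigA; apply/is_trig_mxP => i j lt_ij.
rewrite !mxE -val_eqE (gtn_eqF lt_ij) mulr0n mulr0 addr0.
by have := trigA _ _ lt_ij; rewrite mxE.
Qed.

Lemma similar_diag_mx_neq0 Q (A P : 'M[F]_Q) (D : 'rV_Q) :
  P \in unitmx -> P *m A = diag_mx D *m P -> A \in unitmx -> forall i, D 0 i != 0.
Proof.
move=> Pu PA Au; have : \det (diag_mx D) != 0.
  have detP : \det P != 0 by rewrite -unitfE -unitmxE.
  have -> : \det (diag_mx D) = \det A.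
    by apply: (mulIf detP); rewrite -det_mulmx -PA det_mulmx mulrC.
  by rewrite -unitfE -unitmxE.
by rewrite det_diag => /prodf_neq0 D_neq0 i; apply: D_neq0.
Qed.

Lemma line_avoids_coincidences Q (a s : 'I_Q -> F) :
  injective s -> (forall i, s i != 0) ->
  exists bad : seq F, forall t, t \notin bad ->
    injective (fun i => a i + t * s i) /\ forall i, a i + t * s i != 0.
Proof.
move=> s_inj s_neq0.
exists ([seq (a j - a i) / (s i - s j) | i <- enum 'I_Q, j <- enum 'I_Q] ++
        [seq - a i / s i | i <- enum 'I_Q]) => t.
rewrite mem_cat negb_or => /andP[t_coll t_root]; split.
- move=> i j eq_ij; apply/eqP; apply: contraT => neq_ij.
  have sij : s i - s j != 0 by rewrite subr_eq0 (inj_eq s_inj).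
  apply: contraR t_coll => _; apply/allpairsP; exists (i, j); rewrite !mem_enum.
  split=> //=; apply: (mulIf sij); rewrite divfK //.
  by rewrite -[a j](addrK (t * s j)) -eq_ij; ring.
- move=> i; apply: contra t_root; rewrite addrC addr_eq0 => /eqP t_a.
  by apply/mapP; exists i; rewrite ?mem_enum //; apply: (mulIf (s_neq0 i)); rewrite divfK.
Qed.

End Diagonalization.

Section Representations.
Variables (n m : nat) (src tgt : 'I_m -> 'I_n) (K : fieldType).
Notation rp d := (rep src tgt K d).

Lemma rep_iso_eq d (x y : rp d) : (forall a, x a = y a) -> rep_iso x y.
Proof.
move=> E; exists (fun v => 1%:M), (fun v => 1%:M); split => // [v|v|a];
  by rewrite ?mulmx1 ?mul1mx ?E.
Qed.

Lemma rep_iso_sym d e (x : rp d) (y : rp e) : rep_iso x y -> rep_iso y x.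
Proof.
case=> f [g [fg gf H]]; exists g, f; split => // a.
rewrite -[RHS]mulmx1 -(fg (tgt a)) mulmxA -(mulmxA (g (src a))) H.
by rewrite !mulmxA gf mul1mx.
Qed.

Lemma rep_iso_trans d e d' (x : rp d) (y : rp e) (z : rp d') :
  rep_iso x y -> rep_iso y z -> rep_iso x z.
Proof.
case=> f1 [g1 [fg1 gf1 H1]] [f2 [g2 [fg2 gf2 H2]]].
exists (fun v => f1 v *m f2 v), (fun v => g2 v *m g1 v); split => [v|v|a].
- by rewrite mulmxA -(mulmxA (f1 v)) fg2 mulmx1 fg1.
- by rewrite mulmxA -(mulmxA (g2 v)) gf1 mulmx1 gf2.
- by rewrite mulmxA H1 -mulmxA H2 mulmxA.
Qed.

Lemma rep_iso_bij d e (x : rp d) (y : rp e)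
    (s : forall v, 'I_(d v) -> 'I_(e v)) (t : forall v, 'I_(e v) -> 'I_(d v)) :
  (forall v, cancel (s v) (t v)) -> (forall v, cancel (t v) (s v)) ->
  (forall a i j, x a i j = y a (s _ i) (s _ j)) -> rep_iso x y.
Proof.
move=> st ts E.
exists (fun v => \matrix_(i, j) (s v i == j)%:R),
       (fun v => \matrix_(i, j) (t v i == j)%:R); split => [v|v|a];
  apply/matrixP => i j; rewrite !mxE; under eq_bigr do rewrite !mxE.
- by rewrite sum_delta_l st.
- by rewrite sum_delta_l ts.
- under [RHS]eq_bigr do rewrite !mxE.
  under eq_bigr do rewrite (can2_eq (st _) (ts _)).
  by rewrite sum_delta_l sum_delta_r E ts.
Qed.

Lemma rep_iso_dim0 d e (x : rp d) (y : rp e) :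
  (forall v, d v = 0%N) -> (forall v, e v = 0%N) -> rep_iso x y.
Proof.
have mx_dim0 k l (A C : 'M[K]_(k, l)) : k = 0%N -> A = C.
  by move=> k0; move: A C; rewrite k0 => A C; apply/matrixP => -[].
move=> d0 e0; exists (fun v => 0), (fun v => 0); split => [v|v|a]; exact: mx_dim0.
Qed.

Lemma dsum2_iso (P P' Q Q' : prep src tgt K) :
  rep_iso (projT2 P) (projT2 P') -> rep_iso (projT2 Q) (projT2 Q') ->
  rep_iso (projT2 (dsum2 P Q)) (projT2 (dsum2 P' Q')).
Proof.
case=> f1 [g1 [fg1 gf1 H1]] [f2 [g2 [fg2 gf2 H2]]].
exists (fun v => block_mx (f1 v) 0 0 (f2 v)), (fun v => block_mx (g1 v) 0 0 (g2 v)).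
split => [v|v|a] /=; rewrite mulmx_block !mulmx0 !mul0mx !addr0 !add0r.
- by rewrite fg1 fg2 -scalar_mx_block.
- by rewrite gf1 gf2 -scalar_mx_block.
- by rewrite mulmx_block !mulmx0 !mul0mx !addr0 !add0r H1 H2.
Qed.

Definition conj_rep d e (f : forall v, 'M[K]_(d v, e v)) (g : forall v, 'M[K]_(e v, d v))
    (y : rp e) : rp d :=
  fun a => f (src a) *m y a *m g (tgt a).

Lemma conj_rep_iso d e f g (y : rp e) :
  (forall v, f v *m g v = 1%:M) -> (forall v, g v *m f v = 1%:M) ->
  rep_iso (@conj_rep d e f g y) y.
Proof. by move=> fg gf; exists f, g; split => // a; rewrite -mulmxA gf mulmx1. Qed.

Lemma rep_iso_conj d e (x : rp d) (y : rp e) : rep_iso x y ->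
  exists f g, [/\ forall v, f v *m g v = 1%:M, forall v, g v *m f v = 1%:M &
                  forall a, x a = @conj_rep d e f g y a].
Proof.
case=> f [g [fg gf H]]; exists f, g; split => // a.
by rewrite /conj_rep -H -mulmxA fg mulmx1.
Qed.

Lemma castmx_mulmx k k' l p (h : k = k') (A : 'M[K]_(k, l)) (C : 'M[K]_(l, p)) :
  castmx (h, erefl p) (A *m C) = castmx (h, erefl l) A *m C.
Proof. by case: k' / h; rewrite !castmx_id. Qed.

Lemma mulmx_castmx_cancel d e (v w : 'I_n) (h : v = w) k l
    (g : forall u, 'M[K]_(e u, d u)) (f : forall u, 'M[K]_(d u, e u))
    (Y : 'M[K]_(k, e v)) (Z : 'M[K]_(e w, l)) :
  (forall u, g u *m f u = 1%:M) ->
  Y *m g v *m castmx (esym (congr1 d h), erefl l) (f w *m Z) =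
  Y *m castmx (esym (congr1 e h), erefl l) Z.
Proof.
move=> gf; case: w / h Z => Z; rewrite !castmx_id.
by rewrite mulmxA -(mulmxA Y) gf mulmx1.
Qed.

Lemma modvar_iso (r : rel 'I_m) d e (x : rp d) (y : rp e) :
  rep_iso x y -> modvar r y -> modvar r x.
Proof.
move=> /rep_iso_conj [f [g [_ gf xE]]] My a b h rab.
rewrite !xE /conj_rep -(mulmxA (f (src b))) (mulmx_castmx_cancel _ _ _ gf).
by rewrite castmx_mulmx mulmxA -(mulmxA (f (src a))) My // mulmx0 mul0mx.
Qed.

Lemma polyfun_ext d (f : rp d -> K) (x y : rp d) :
  polyfun f -> (forall a, x a = y a) -> f x = f y.
Proof.
move=> pf E; elim: pf => //= [a i j|f1 g1 _ -> _ ->|f1 g1 _ -> _ ->] //.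
by rewrite E.
Qed.

Lemma poly_fun_polyfun_comp d (f : rp d -> K) (c : K -> rp d) :
  polyfun f -> (forall a i j, poly_fun (fun t => c t a i j)) ->
  poly_fun (fun t => f (c t)).
Proof.
move=> pf Hc; elim: pf => [c0|a i j|f1 g1 _ H1 _ H2|f1 g1 _ H1 _ H2].
- exact: poly_fun_const.
- exact: Hc.
- exact: poly_funD.
- exact: poly_funM.
Qed.

Lemma zclosureW d (S : rp d -> Prop) (x : rp d) : S x -> zclosure S x.
Proof. by move=> Sx f _; apply. Qed.

Lemma zclosure_ext d (S : rp d -> Prop) (x y : rp d) :
  (forall a, x a = y a) -> zclosure S x -> zclosure S y.
Proof. by move=> E Sx f pf fS; rewrite -(polyfun_ext pf E); apply: Sx. Qed.

Lemma zclosure_sub d (S T : rp d -> Prop) (x : rp d) :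
  (forall y, S y -> zclosure T y) -> zclosure S x -> zclosure T x.
Proof. by move=> ST Sx f pf fT; apply: Sx => // y /ST; apply. Qed.

End Representations.

Lemma zclosure_line n m (src tgt : 'I_m -> 'I_n) (K : closedFieldType) d
    (S : rep src tgt K d -> Prop) (c : K -> rep src tgt K d) (bad : seq K) :
  (forall a i j, poly_fun (fun t => c t a i j)) ->
  (forall t, t \notin bad -> S (c t)) -> zclosure S (c 0).
Proof.
move=> c_poly Sc f pf fS.
have [P fcP] := poly_fun_polyfun_comp pf c_poly.
suff P0 : P = 0 by rewrite fcP P0 horner0.
by apply: (poly_eq0_cofinite (bad := bad)) => t /Sc /fS; rewrite fcP.
Qed.

Section FinRep.
Variables (n m : nat) (src tgt : 'I_m -> 'I_n) (K : fieldType).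

Definition frep (T : 'I_n -> finType) := forall a, T (src a) -> T (tgt a) -> K.

Definition frep_pack (T : 'I_n -> finType) (X : frep T) : prep src tgt K :=
  existT (fun d => rep src tgt K d) (fun v => #|{: T v}|)
    (fun a => \matrix_(i, j) X a (enum_val i) (enum_val j)).

Lemma sum_enum_val (T : finType) (h : T -> K) :
  \sum_(k < #|{: T}|) h (enum_val k) = \sum_(t : T) h t.
Proof. by rewrite -(big_enum_val (A := T)). Qed.

Lemma frep_pack_iso (T T' : 'I_n -> finType) (X : frep T) (Y : frep T')
    (F : forall v, T v -> T' v -> K) (G : forall v, T' v -> T v -> K) :
  (forall v u w, \sum_t F v u t * G v t w = (u == w)%:R) ->
  (forall v u w, \sum_t G v u t * F v t w = (u == w)%:R) ->
  (forall a u w, \sum_t X a u t * F _ t w = \sum_t F _ u t * Y a t w) ->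
  rep_iso (projT2 (frep_pack X)) (projT2 (frep_pack Y)).
Proof.
move=> FG GF XF.
exists (fun v => \matrix_(i, j) F v (enum_val i) (enum_val j)),
       (fun v => \matrix_(i, j) G v (enum_val i) (enum_val j)).
split => [v|v|a]; apply/matrixP => i j; rewrite !mxE; under eq_bigr do rewrite !mxE.
- by rewrite (sum_enum_val (fun t => F v _ t * G v t _)) FG (inj_eq enum_val_inj).
- by rewrite (sum_enum_val (fun t => G v _ t * F v t _)) GF (inj_eq enum_val_inj).
- under [RHS]eq_bigr do rewrite !mxE.
  rewrite (sum_enum_val (fun t => X a _ t * F _ t _)).
  by rewrite (sum_enum_val (fun t => F _ _ t * Y a t _)) XF.
Qed.

Lemma frep_pack_bij (T T' : 'I_n -> finType) (X : frep T) (Y : frep T')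
    (f : forall v, T v -> T' v) (g : forall v, T' v -> T v) :
  (forall v, cancel (f v) (g v)) -> (forall v, cancel (g v) (f v)) ->
  (forall a u w, X a u w = Y a (f _ u) (f _ w)) ->
  rep_iso (projT2 (frep_pack X)) (projT2 (frep_pack Y)).
Proof.
move=> fg gf XY.
apply: (rep_iso_bij (s := fun v i => enum_rank (f v (enum_val i)))
                    (t := fun v k => enum_rank (g v (enum_val k)))).
- by move=> v i /=; rewrite enum_rankK fg enum_valK.
- by move=> v i /=; rewrite enum_rankK gf enum_valK.
- by move=> a i j /=; rewrite !mxE !enum_rankK XY.
Qed.

Definition frep_sum (T1 T2 : 'I_n -> finType) (X1 : frep T1) (X2 : frep T2) :
    frep (fun v => T1 v + T2 v)%type :=
  fun a u w => match u, w with
               | inl u1, inl w1 => X1 a u1 w1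
               | inr u2, inr w2 => X2 a u2 w2
               | _, _ => 0 end.

Lemma dsum2_frep_pack T1 T2 (X1 : frep T1) (X2 : frep T2) :
  rep_iso (projT2 (dsum2 (frep_pack X1) (frep_pack X2)))
          (projT2 (frep_pack (frep_sum X1 X2))).
Proof.
pose s v (i : 'I_(#|{: T1 v}| + #|{: T2 v}|)) : 'I_#|{: (T1 v + T2 v)%type}| :=
  enum_rank (match split i with inl i1 => inl (enum_val i1)
                              | inr i2 => inr (enum_val i2) end).
pose t v (k : 'I_#|{: (T1 v + T2 v)%type}|) : 'I_(#|{: T1 v}| + #|{: T2 v}|) :=
  match enum_val k with inl u => lshift _ (enum_rank u)
                      | inr u => rshift _ (enum_rank u) end.
apply: (rep_iso_bij (s := s) (t := t)).
- move=> v i; rewrite /s /t; case: splitP => j Hj; rewrite enum_rankK enum_valK;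
  by apply/val_inj; rewrite /= Hj.
- move=> v k; rewrite /s /t; case E: (enum_val k) => [u|u];
  by rewrite ?split_lshift ?split_rshift enum_rankK -E enum_valK.
- move=> a i j /=; rewrite /s.
  have [[i1 ->]|[i1 ->]] := ord_splitP i; have [[j1 ->]|[j1 ->]] := ord_splitP j;
  by rewrite ?block_mxEul ?block_mxEur ?block_mxEdl ?block_mxEdr
             ?split_lshift ?split_rshift !mxE !enum_rankK.
Qed.

End FinRep.

Section BandRep.
Variables (n m : nat) (src tgt : 'I_m -> 'I_n) (K : fieldType) (B : seq (letter m)).

Definition band_coef Q (Phi : 'M[K]_Q) (p : bpos B) : 'M[K]_Q :=
  if val p == 0%N then Phi else 1%:M.

Definition band_incidence (a : 'I_m) (p s s' : bpos B) : K :=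
  if (blet p).1 == a then
    (if (blet p).2 then ((s == p) && (s' == ordS p))%:R
     else ((s == ordS p) && (s' == p))%:R)
  else 0.

Definition band_entry Q (Phi : 'M[K]_Q) (a : 'I_m)
    (u : bidx src tgt B Q (src a)) (w : bidx src tgt B Q (tgt a)) : K :=
  \sum_(p : bpos B) band_incidence a p (val u.1) (val w.1) * band_coef Phi p u.2 w.2.

Arguments band_entry [Q] Phi a u w.

Definition band_rep Q (Phi : 'M[K]_Q) : prep src tgt K := frep_pack (band_entry Phi).

Definition jordan_mx (lam : K) q : 'M[K]_q := \matrix_(i, j) jordan lam i j.

Lemma bandmod_band_rep lam q :
  rep_iso (projT2 (bandmod src tgt B lam q)) (projT2 (band_rep (jordan_mx lam q))).
Proof.
apply: rep_iso_eq => a; apply/matrixP => i j; rewrite !mxE.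
apply: eq_bigr => p _; rewrite /band_incidence /band_coef /bcoef.
case: ((blet p).1 == a); last by rewrite mul0r.
by case: (blet p).2; case: (val p == 0%N); rewrite ?mxE.
Qed.

Lemma band_entry_mulmxr Q Q' (Phi : 'M[K]_Q) (P : 'M[K]_(Q, Q')) a u w :
  \sum_t band_entry Phi a u t * ((t.1 == w.1)%:R * P t.2 w.2) =
  \sum_p band_incidence a p (val u.1) (val w.1) * (band_coef Phi p *m P) u.2 w.2.
Proof.
rewrite (sum_pair_delta_r (fun x y => band_entry Phi a u (x, y))) /band_entry /=.
under eq_bigr do rewrite mulr_suml.
rewrite exchange_big; apply: eq_bigr => p _ /=; rewrite mxE mulr_sumr.
by apply: eq_bigr => y _; rewrite mulrA.
Qed.

Lemma band_entry_mulmxl Q Q' (Phi : 'M[K]_Q) (P : 'M[K]_(Q', Q)) a u w :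
  \sum_t ((u.1 == t.1)%:R * P u.2 t.2) * band_entry Phi a t w =
  \sum_p band_incidence a p (val u.1) (val w.1) * (P *m band_coef Phi p) u.2 w.2.
Proof.
rewrite (sum_pair_delta_l (fun x y => band_entry Phi a (x, y) w)) /band_entry /=.
under eq_bigr do rewrite mulr_sumr.
rewrite exchange_big; apply: eq_bigr => p _ /=; rewrite mxE mulr_sumr.
by apply: eq_bigr => y _; rewrite mulrCA.
Qed.

Lemma band_rep_similar Q (P Phi Phi' : 'M[K]_Q) :
  P \in unitmx -> Phi *m P = P *m Phi' ->
  rep_iso (projT2 (band_rep Phi)) (projT2 (band_rep Phi')).
Proof.
move=> Pu PhiP.
have delta_mul (P1 P2 : 'M[K]_Q) v (u w : bidx src tgt B Q v) :
    \sum_t ((u.1 == t.1)%:R * P1 u.2 t.2) * ((t.1 == w.1)%:R * P2 t.2 w.2) =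
    (u.1 == w.1)%:R * (P1 *m P2) u.2 w.2.
  rewrite (sum_pair_delta_r (fun x y => (u.1 == x)%:R * P1 u.2 y)) mxE mulr_sumr.
  by apply: eq_bigr => y _; rewrite mulrA.
have eq_pair (v : 'I_n) (u w : bidx src tgt B Q v) :
    (u.1 == w.1)%:R * (u.2 == w.2)%:R = (u == w)%:R :> K.
  by case: u w => [u1 u2] [w1 w2]; rewrite xpair_eqE; case: (u1 == w1); rewrite ?mul1r ?mul0r.
apply: (frep_pack_iso (F := fun v u w => (u.1 == w.1)%:R * P u.2 w.2)
                      (G := fun v u w => (u.1 == w.1)%:R * invmx P u.2 w.2)).
- by move=> v u w; rewrite delta_mul mulmxV // mxE eq_pair.
- by move=> v u w; rewrite delta_mul mulVmx // mxE eq_pair.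
move=> a u w; rewrite band_entry_mulmxr band_entry_mulmxl.
by apply: eq_bigr => p _; rewrite /band_coef; case: ifP => _; rewrite ?PhiP ?mul1mx ?mulmx1.
Qed.

Lemma band_rep_block Q1 Q2 (Phi1 : 'M[K]_Q1) (Phi2 : 'M[K]_Q2) :
  rep_iso (projT2 (band_rep (block_mx Phi1 0 0 Phi2)))
          (projT2 (dsum2 (band_rep Phi1) (band_rep Phi2))).
Proof.
apply: rep_iso_trans (rep_iso_sym (dsum2_frep_pack _ _)).
pose I Q v := bidx src tgt B Q v.
pose f v (u : I (Q1 + Q2)%N v) : (I Q1 v + I Q2 v)%type :=
  match split u.2 with inl k => inl (u.1, k) | inr k => inr (u.1, k) end.
pose g v (u : (I Q1 v + I Q2 v)%type) : I (Q1 + Q2)%N v :=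
  match u with inl u1 => (u1.1, lshift Q2 u1.2) | inr u2 => (u2.1, rshift Q1 u2.2) end.
apply: (frep_pack_bij (f := f) (g := g)).
- by move=> v [s k]; rewrite /f /g /=; case: splitP => j Hj; congr (_, _); apply/val_inj.
- by move=> v [[s k]|[s k]]; rewrite /f /g /= ?split_lshift ?split_rshift.
move=> a [s k] [s' k']; rewrite /f /=.
have [[i ->]|[i ->]] := ord_splitP k; have [[j ->]|[j ->]] := ord_splitP k';
  rewrite ?split_lshift ?split_rshift /= /band_entry;
  [apply: eq_bigr | apply: big1 | apply: big1 | apply: eq_bigr] => p _;
  rewrite /band_coef; case: ifP => _;
  by rewrite ?block_mxEul ?block_mxEur ?block_mxEdl ?block_mxEdr ?mxE ?eq_shift ?mulr0.
Qed.

Lemma band_rep_dim0 (Phi : 'M[K]_0) (P : prep src tgt K) :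
  (forall v, projT1 P v = 0%N) -> rep_iso (projT2 P) (projT2 (band_rep Phi)).
Proof. by move=> P0; apply: rep_iso_dim0 => // v /=; rewrite card_prod card_ord muln0. Qed.

Fixpoint jordan_blocks (ls : seq (K * nat)) : 'M[K]_(sumn (map snd ls)) :=
  match ls return 'M[K]_(sumn (map snd ls)) with
  | [::] => 0
  | l :: ls' => block_mx (jordan_mx l.1 l.2) 0 0 (jordan_blocks ls')
  end.

Lemma dsum_bandmod_jordan_blocks ls :
  rep_iso (projT2 (dsum [seq bandmod src tgt B l.1 l.2 | l <- ls]))
          (projT2 (band_rep (jordan_blocks ls))).
Proof.
elim: ls => [|l ls IH]; first exact: band_rep_dim0.
apply: rep_iso_trans (rep_iso_sym (band_rep_block _ _)).
exact: dsum2_iso (bandmod_band_rep l.1 l.2) IH.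
Qed.

Lemma trmx_jordan_blocks_trig ls : is_trig_mx (jordan_blocks ls)^T.
Proof.
elim: ls => [|l ls IH] /=; first by rewrite trmx0 mx0_is_trig.
rewrite tr_block_mx !trmx0 is_trig_block_mx // IH eqxx andbT.
apply/is_trig_mxP => i j lt_ij; rewrite !mxE /jordan -val_eqE (gtn_eqF lt_ij).
by rewrite ifN_eq // neq_ltn ltnS ltnW.
Qed.

Lemma band_rep_diag Q (D : 'rV[K]_Q) :
  rep_iso (projT2 (band_rep (diag_mx D)))
          (projT2 (dsum [seq bandmod src tgt B (D 0 i) 1 | i <- enum 'I_Q])).
Proof.
elim: Q D => [|Q IH] D.
  by rewrite enum_ord0; apply: rep_iso_sym; apply: band_rep_dim0.
pose D' : 'rV_(1 + Q) := D.
have -> : diag_mx D = diag_mx (row_mx (lsubmx D') (rsubmx D')) by rewrite hsubmxK.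
have -> : [seq bandmod src tgt B (D 0 i) 1 | i <- enum 'I_Q.+1] =
          bandmod src tgt B (D 0 ord0) 1 :: [seq bandmod src tgt B (rsubmx D' 0 i) 1 | i <- enum 'I_Q].
  rewrite enum_ordSl /= -map_comp; congr (_ :: _); apply: eq_map => i /=.
  by rewrite mxE; congr (bandmod _ _ _ (D 0 _) _); apply: val_inj.
rewrite diag_mx_row.
apply: rep_iso_trans (band_rep_block (diag_mx (lsubmx D')) (diag_mx (rsubmx D')))
                     (dsum2_iso _ (IH _)).
apply: rep_iso_trans (rep_iso_sym (bandmod_band_rep _ _)).
apply: rep_iso_eq => a; congr (projT2 (band_rep _) a); apply/matrixP => i j.
by rewrite !ord1 !mxE /jordan /= mulr1n; congr (D 0 _); apply: val_inj.
Qed.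

Lemma poly_fun_band_rep Q (Phi : K -> 'M[K]_Q) :
  (forall i j, poly_fun (fun t => Phi t i j)) ->
  forall a (i : 'I_#|{: bidx src tgt B Q (src a)}|) (j : 'I_#|{: bidx src tgt B Q (tgt a)}|),
    poly_fun (fun t => projT2 (band_rep (Phi t)) a i j).
Proof.
move=> Phi_poly a i j.
apply: (@poly_fun_ext _ _ (fun t => band_entry (Phi t) a (enum_val i) (enum_val j))).
  by move=> t; rewrite mxE.
apply: poly_fun_sum => p; apply: poly_funM; first exact: poly_fun_const.
by rewrite /band_coef; case: (val p == 0%N); [apply: Phi_poly | apply: poly_fun_const].
Qed.

Section BandRelations.
Variable r : rel 'I_m.
Hypothesis band_B : is_band src tgt r B.

Lemma band_ok2 (p : bpos B) : ok2 src tgt r (blet p) (blet (ordS p)).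
Proof.
have [_ _ /(_ 2%N isT)] := band_B; rewrite /= cats0 => string_BB.
pose x0 := blet p.
have ok_nth i : (i.+1 < size (B ++ B))%N ->
    ok2 src tgt r (nth x0 (B ++ B) i) (nth x0 (B ++ B) i.+1).
  by move: string_BB; rewrite /is_string; case: (B ++ B) => [|l s] // /(pathP x0) ok_s; apply: ok_s.
have lt_pB : (p < size B)%N := ltn_ord p.
have -> : blet p = nth x0 (B ++ B) p by rewrite nth_cat lt_pB /blet (tnth_nth x0).
have -> : blet (ordS p) = nth x0 (B ++ B) p.+1.
  rewrite /blet (tnth_nth x0) /= nth_cat.
  case: (ltngtP p.+1 (size B)) => [lt_SpB|gt_SpB|eq_SpB].
  - by rewrite modn_small.
  - by move: gt_SpB; rewrite ltnS leqNgt lt_pB.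
  - by rewrite eq_SpB subnn modnn.
by apply: ok_nth; rewrite size_cat -addn1 leq_add // (leq_ltn_trans (leq0n p) lt_pB).
Qed.

Lemma band_incidence_rel (a b : 'I_m) (p p' s t w : bpos B) :
  r a b -> band_incidence a p s t * band_incidence b p' t w = 0.
Proof.
move=> rab; rewrite /band_incidence.
case: ((blet p).1 =P a) => Ha; last by rewrite mul0r.
case: ((blet p').1 =P b) => Hb; last by rewrite mulr0.
case Ed1: (blet p).2; case Ed2: (blet p').2.
- case: (t =P ordS p) => [Ht|_]; last by rewrite andbF mul0r.
  case: (t =P p') => [Ht'|_]; last by rewrite mulr0.
  by have := band_ok2 p; rewrite -Ht Ht' /ok2 Ed1 Ed2 Ha Hb rab /= !andbF.
- case: (t =P ordS p) => [Ht|_]; last by rewrite andbF mul0r.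
  case: (t =P ordS p') => [Ht'|_]; last by rewrite mulr0.
  by move: Ed1; rewrite (ordS_inj (etrans (esym Ht) Ht')) Ed2.
- case: (t =P p) => [Ht|_]; last by rewrite andbF mul0r.
  case: (t =P p') => [Ht'|_]; last by rewrite mulr0.
  by move: Ed1; rewrite -Ht Ht' Ed2.
- case: (t =P p) => [Ht|_]; last by rewrite andbF mul0r.
  case: (t =P ordS p') => [Ht'|_]; last by rewrite mulr0.
  by have := band_ok2 p'; rewrite -Ht' Ht /ok2 Ed1 Ed2 Ha Hb rab /= !andbF.
Qed.

Lemma enum_val_cast_pos Q v w (e : v = w)
    (h : #|{: bidx src tgt B Q v}| = #|{: bidx src tgt B Q w}|)
    (k : 'I_#|{: bidx src tgt B Q v}|) :
  val (enum_val (cast_ord h k)).1 = val (enum_val k).1.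
Proof. by case: w / e h => h; rewrite (eq_irrelevance h erefl) cast_ord_id. Qed.

Lemma modvar_band_rep Q (Phi : 'M[K]_Q) : modvar r (projT2 (band_rep Phi)).
Proof.
move=> a b e rab; apply/matrixP => i j; rewrite !mxE.
apply: big1 => k _; rewrite castmxE !mxE /band_entry.
rewrite (enum_val_cast_pos e) mulr_suml; apply: big1 => p _ /=.
rewrite mulr_sumr; apply: big1 => p' _ /=.
by rewrite mulrACA band_incidence_rel // mul0r.
Qed.

End BandRelations.

End BandRep.

Section BandClosure.
Variables (n m : nat) (src tgt : 'I_m -> 'I_n) (K : closedFieldType).
Variables (r : rel 'I_m) (B : seq (letter m)).
Hypothesis band_B : is_band src tgt r B.

Lemma band_union_band_rep Q d (z : rep src tgt K d) (Phi : 'M[K]_Q) :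
  is_trig_mx Phi^T -> injective (fun i => Phi i i) -> (forall i, Phi i i != 0) ->
  rep_iso z (projT2 (band_rep src tgt B Phi)) -> band_union r B Q z.
Proof.
move=> trig_Phi inj_Phi Phi_neq0 iso_z.
have [P P_unit [D PPhi]] := trig_uniq_diagonalizable trig_Phi inj_Phi.
have Phi_unit : Phi \in unitmx.
  rewrite unitmxE -det_tr det_trig // unitfE.
  by apply/prodf_neq0 => i _; rewrite mxE.
split; first exact: modvar_iso iso_z (modvar_band_rep band_B Phi).
exists [seq D 0 i | i <- enum 'I_Q]; split.
- by rewrite size_map size_enum_ord.
- by apply/allP => _ /mapP [i _ ->]; apply: similar_diag_mx_neq0 P_unit PPhi Phi_unit i.
rewrite -map_comp; apply: rep_iso_trans iso_z _.
exact: rep_iso_trans (rep_iso_sym (band_rep_similar src tgt B P_unit (esym PPhi)))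
                     (band_rep_diag src tgt B D).
Qed.

Lemma band_family_sub_zclosure_union Q d (y : rep src tgt K d) :
  band_family r B Q y -> zclosure (@band_union _ _ src tgt r K B Q d) y.
Proof.
move=> [_ [ls [_ <- iso_y]]].
set J := jordan_blocks ls.
have [f [g [fg gf yE]]] :=
  rep_iso_conj (rep_iso_trans iso_y (dsum_bandmod_jordan_blocks src tgt B ls)).
have [s [s_inj s_neq0]] := closed_field_inj_neq0 K (sumn (map snd ls)).
have [bad bad_generic] := line_avoids_coincidences (fun i => J i i) s_inj s_neq0.
pose Phi t := J + t *: diag_mx (\row_i s i).
have Phi_diag t i : Phi t i i = J i i + t * s i by rewrite !mxE eqxx mulr1n.
pose c t := conj_rep f g (projT2 (band_rep src tgt B (Phi t))).
apply: (zclosure_ext (x := c 0)) => [a|].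
  by rewrite yE /c /Phi scale0r addr0.
apply: (zclosure_line (bad := bad)) => [a i j | t t_bad].
  by apply: poly_fun_mulmx => i' j'; apply: poly_fun_band_rep => k l; apply: poly_fun_line_mx.
have [inj_t neq0_t] := bad_generic t t_bad.
have iso_t := conj_rep_iso (projT2 (band_rep src tgt B (Phi t))) fg gf.
apply: (band_union_band_rep _ _ _ iso_t).
- exact/trmx_trig_add_diag/trmx_jordan_blocks_trig.
- by move=> i j; rewrite /= !Phi_diag; apply: inj_t.
- by move=> i; rewrite Phi_diag.
Qed.

Lemma band_union_sub_family Q d (x : rep src tgt K d) :
  band_union r B Q x -> band_family r B Q x.
Proof.
move=> [Mx [lams [size_lams lams_neq0 iso_x]]]; split => //.
exists [seq (l, 1%N) | l <- lams]; split.
- by rewrite all_map; apply: sub_all lams_neq0 => l /= ->.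
- by rewrite -map_comp -size_lams; elim: (lams) => //= l s ->.
- by rewrite -map_comp.
Qed.

End BandClosure.

Theorem mainTheorem1 (K : closedFieldType) (n m : nat) (src tgt : 'I_m -> 'I_n)
  (rel : rel 'I_m) (B : seq (letter m)) (q : nat) :
  gentle src tgt rel -> is_band src tgt rel B -> (0 < q)%N ->
  let d := fun x => (q * projT1 (bandmod src tgt B (1 : K) 1) x)%N in
  forall x : rep src tgt K d,
    zclosure (@band_family _ _ src tgt rel K B q d) x <->
    zclosure (@band_union _ _ src tgt rel K B q d) x.
Proof.
move=> _ band_B _ d x; split; apply: zclosure_sub => y.
- exact: band_family_sub_zclosure_union.
- by move/band_union_sub_family; apply: zclosureW.
Qed.
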